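(* Let $T$ be a TCD map on a minimal BTB graph $G$ and $H$ a hyperplane. Suppose $\tilde T$ is obtained from $T$ by a local move, and $H$ is generic with respect to both $T$ and $\tilde T$. If the move is a resplit at an internal white vertex $w_0$, then the affine cluster structure of $\tilde T$ with respect to $H$ is obtained from that of $T$ by mutation at $w_0$ (identifying $\tilde w_0$ with $w_0$ and all other white vertices with themselves). If the move is a spider move, the affine cluster structure with respect to $H$ is unchanged.
   Context: A BTB graph is a finite planar bipartite graph $G$ (black $B$, white $W$) in a closed disk or cactus. It has boundary white vertices $w_1^\partial,\dots,w_n^\partial$ in clockwise order on the boundary, and every black vertex has degree $3$. Minimality: with zig-zag paths turning maximally left at white and right at black vertices, none is closed, none traverses an edge twice, and no two both traverse two distinct edges $e_1$ then $e_2$. A TCD map is $T:W\to\mathbb{CP}^d$ such that the three neighbours of each black vertex have pairwise distinct collinear images. A hyperplane $H=\mathbb P(\ker h)$ is generic with respect to $T$ if it contains no $T(w)$. A VRC in affine gauge with respect to $H$ consists of lifts $V(w)$ with $h(V(w))=1$ and edge weights $\mu$ with $\sum_{w\sim b}\mu(bw)V(w)=0$; then $\sum_{w\sim b}\mu(bw)=0$. Affine cluster structure. The quiver has a vertex per white vertex, mutable if internal and frozen if boundary. For each black vertex with neighbours $w_1,w_2,w_3$ in clockwise order, add arrows $w_1\to w_2\to w_3\to w_1$; add arrows $w^\partial_{i+1}\to w^\partial_i$; delete oriented $2$-cycles. For an internal white vertex $w$ with black neighbours $b_1,\dots,b_m$ in counterclockwise order, and $w_i,w_i'$ the other neighbours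 of $b_i$ with counterclockwise order $w,w_i,w_i'$ around $b_i$, set $Y_w=(-1)^{m+1}\prod_i\mu(b_iw_i')/\mu(b_iw_i)$ in affine gauge. Moves. Resplit: at a degree-$2$ internal white vertex $w_0$ with black neighbours $b$ (other neighbours $w_1,w_2$) and $b'$ (other neighbours $w_3,w_4$), with $w_1,w_4$ on one face containing $b,w_0,b'$ and $w_2,w_3$ on the other. It replaces $w_0,b,b'$ by $\tilde w_0$ and black vertices adjacent to $\{\tilde w_0,w_1,w_4\}$ and $\{\tilde w_0,w_2,w_3\}$. Writing $V(w_0)=\alpha_1V(w_1)+\alpha_2V(w_2)=\alpha_3V(w_3)+\alpha_4V(w_4)$, set $\tilde T(\tilde w_0)=[\alpha_1V(w_1)-\alpha_4V(w_4)]$; other points are unchanged. Spider move: at an internal face with boundary $w_1,b,w_3,b'$, with third neighbours $w_2$ of $b$ and $w_4$ of $b'$. It replaces $b,b'$ by black vertices adjacent to $\{w_1,w_2,w_4\}$ and $\{w_3,w_2,w_4\}$ and keeps all points. Mutation at $v$. With $\nu(a,c)=\#(a\to c)-\#(c\to a)$: $\nu'(a,c)=-\nu(a,c)$ if $v\in\{a,c\}$, and otherwise $\nu'(a,c)=\nu(a,c)+\max(0,\nu(a,v))\max(0,\nu(v,c))-\max(0,\nu(c,v))\max(0,\nu(v,a))$. The variables transform as $Y'_v=Y_v^{-1}$; $Y'_u=Y_u(1+Y_v)^{\nu(v,u)}$ if $\nu(v,u)>0$; $Y'_u=Y_u(1+Y_v^{-1})^{-\nu(u,v)}$ if $\nu(u,v)>0$;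 and $Y'_u=Y_u$ otherwise. *)

From Stdlib Require Import Reals.
From HB Require Import structures.
From mathcomp Require Import all_boot all_order all_algebra all_fingroup.
From mathcomp Require Import complex Rstruct.

Set Implicit Arguments. Unset Strict Implicit. Unset Printing Implicit Defensive.
Import Order.TTheory GRing.Theory Num.Theory.
Local Open Scope ring_scope.

Definition C : fieldType := Rdefinitions.R[i].

(* White vertices: a finType W.  Black vertices: a finType B.  Every black  *)
(* vertex has degree 3: [nb b : 'I_3 -> W] lists its three white neighbours *)
(* in CLOCKWISE order (nb b 0, nb b 1, nb b 2).  The edges of G are thus    *)
(* the pairs (b, i) : B * 'I_3, edge (b,i) joining b and nb b i.            *)
(* The boundary white vertices w^\partial_1..w^\partial_n in clockwise      *)
(* order on the boundary are [bd : 'I_n -> W] (0-based, injective).         *)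
(* The embedding in the disk (or cactus) is encoded as a genus-0            *)
(* combinatorial map after "coning off" the boundary: one adds an extra     *)
(* black vertex b_oo in the outer region joined by a "spoke" edge inr j to  *)
(* each boundary vertex bd j.  Extended edge set: xedge B n.                *)
(* rot : {perm xedge B n} is the clockwise rotation around white vertices   *)
(* (spokes included); the clockwise rotation around black vertices is       *)
(* i |-> i+1 at b, and j |-> j-1 around b_oo (clockwise around the outer    *)
(* vertex = counterclockwise along the boundary circle).                    *)

Definition edge (B : finType) : finType := (B * 'I_3)%type.
Definition xedge (B : finType) (n : nat) : finType := (edge B + 'I_n)%type.

Definition xwh (W B : finType) (n : nat) (nb : B -> 'I_3 -> W) (bd : 'I_n -> W)
  (e : xedge B n) : W :=
  match e with inl (b, i) => nb b i | inr j => bd j end.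

Definition xrotB (B : finType) (n : nat) (e : xedge B n) : xedge B n :=
  match e with inl (b, i) => inl (b, ordS i) | inr j => inr (ord_pred j) end.

Definition xrotBinv (B : finType) (n : nat) (e : xedge B n) : xedge B n :=
  match e with inl (b, i) => inl (b, ord_pred i) | inr j => inr (ordS j) end.

(* Face permutation: for an edge e, viewed as traversed from its white end  *)
(* to its black end with the face F on its right, face_next e is the next   *)
(* edge of the boundary of F traversed in the same way (from white to       *)
(* black).  Faces are the orbits of face_next.                              *)
Definition face_next (B : finType) (n : nat) (rot : {perm xedge B n})
  (e : xedge B n) : xedge B n :=
  (rot^-1)%g (xrotBinv e).

Definition map_adj (B : finType) (n : nat) (rot : {perm xedge B n}) :
  rel (xedge B n) :=
  fun x y => [|| y == xrotB x, y == rot x, x == xrotB y | x == rot y].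

(* rot is a rotation system for the white vertices, and the resulting       *)
(* combinatorial map has genus 0 (Euler: V - E + F = 2 * #components).      *)
Definition btb_embedding (W B : finType) (n : nat) (nb : B -> 'I_3 -> W)
  (bd : 'I_n -> W) (rot : {perm xedge B n}) : Prop :=
  [/\ injective bd,
      (forall e, xwh nb bd (rot e) = xwh nb bd e),
      (forall e e', xwh nb bd e = xwh nb bd e' -> fconnect rot e e') &
      (fcard (@xrotB B n) predT + fcard rot predT
         + fcard (fun e => xrotB (rot e)) predT
       = #|{: xedge B n}| + 2 * n_comp (map_adj rot) predT)%N ].

Definition internal (W : finType) (n : nat) (bd : 'I_n -> W) (w : W) : bool :=
  w \notin codom bd.

(* A dart is an edge of G with a direction: (e, true) = traversed towards   *)
(* its white end, (e, false) = traversed towards its black end.             *)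
(* Zig-zag paths turn maximally left at white vertices (take the next edge  *)
(* clockwise) and maximally right at black vertices (next edge              *)
(* counterclockwise).  A path reaching a boundary vertex where the next     *)
(* clockwise edge is the spoke (i.e. leaves the disk) ends there.           *)

Definition dart (B : finType) : finType := (edge B * bool)%type.

Definition zz_step (B : finType) (n : nat) (rot : {perm xedge B n})
  (x : dart B) : option (dart B) :=
  match x with
  | (e, true) => match rot (inl e) with inl e' => Some (e', false) | inr _ => None end
  | ((b, i), false) => Some ((b, ord_pred i), true)
  end.

Definition zz_iter (B : finType) (n : nat) (rot : {perm xedge B n}) (k : nat)
  (x : dart B) : option (dart B) :=
  iter k (fun o => obind (zz_step rot) o) (Some x).

Definition zz_after (B : finType) (n : nat) (rot : {perm xedge B n})
  (x y : dart B) : Prop :=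
  exists2 k : nat, leq 1 k & zz_iter rot k x = Some y.

Definition zz_same (B : finType) (n : nat) (rot : {perm xedge B n})
  (x y : dart B) : Prop :=
  exists k : nat, zz_iter rot k x = Some y \/ zz_iter rot k y = Some x.

Definition minimal (B : finType) (n : nat) (rot : {perm xedge B n}) : Prop :=
  [/\
      (forall x, ~ zz_after rot x x),
      (forall x y, zz_after rot x y -> y.1 <> x.1) &
      (* no two zig-zag paths both traverse distinct edges e1 then e2 *)
      (forall x1 y1 x2 y2, zz_after rot x1 y1 -> zz_after rot x2 y2 ->
         x1.1 = x2.1 -> y1.1 = y2.1 -> x1.1 <> y1.1 -> zz_same rot x1 x2) ].

(* Projective geometry in CP^d: a point is represented by a nonzero vector  *)
(* of C^(d+1) (a row vector); two vectors represent the same point iff      *)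
(* they are proportional.                                                   *)

Definition proj_eq (d : nat) (u v : 'rV[C]_d.+1) : Prop :=
  exists2 c : C, c != 0 & u = c *: v.

Definition collinear3 (d : nat) (u v w : 'rV[C]_d.+1) : bool :=
  (\rank (col_mx u (col_mx v w)) <= 2)%N.

Definition is_TCD (W B : finType) (d : nat) (nb : B -> 'I_3 -> W)
  (T : W -> 'rV[C]_d.+1) : Prop :=
  (forall w, T w != 0) /\
  (forall b, (forall i j : 'I_3, i != j -> ~ proj_eq (T (nb b i)) (T (nb b j)))
             /\ collinear3 (T (nb b 0)) (T (nb b 1)) (T (nb b 2))).

(* the linear form h (hyperplane H = P(ker h)) evaluated on a vector *)
Definition hval (d : nat) (h : 'cV[C]_d.+1) (v : 'rV[C]_d.+1) : C := (v *m h) 0 0.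

Definition generic (W : finType) (d : nat) (h : 'cV[C]_d.+1)
  (T : W -> 'rV[C]_d.+1) : Prop := forall w, hval h (T w) != 0.

Definition aff (d : nat) (h : 'cV[C]_d.+1) (v : 'rV[C]_d.+1) : 'rV[C]_d.+1 :=
  (hval h v)^-1 *: v.

Definition affine_VRC (W B : finType) (d : nat) (nb : B -> 'I_3 -> W)
  (T : W -> 'rV[C]_d.+1) (h : 'cV[C]_d.+1)
  (V : W -> 'rV[C]_d.+1) (mu : B -> 'I_3 -> C) : Prop :=
  [/\ (forall w, hval h (V w) = 1),
      (forall w, proj_eq (V w) (T w)),
      (forall b i, mu b i != 0) &
      (forall b, \sum_(i < 3) mu b i *: V (nb b i) = 0) ].

Definition bz (b : bool) : int := if b then 1 else 0.

(* nu(a, c) = #(a -> c) - #(c -> a) in the quiver: arrows w1->w2->w3->w1   *)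
(* for each black vertex with clockwise neighbours w1,w2,w3, and arrows     *)
(* w_(i+1) -> w_i between consecutive boundary vertices (i = 1..n-1).       *)
(* Deleting oriented 2-cycles does not change nu.                           *)
Definition quiver (W B : finType) (n : nat) (nb : B -> 'I_3 -> W)
  (bd : 'I_n -> W) (a c : W) : int :=
  \sum_(e : edge B)
     (bz ((nb e.1 e.2 == a) && (nb e.1 (ordS e.2) == c))
      - bz ((nb e.1 e.2 == c) && (nb e.1 (ordS e.2) == a)))
  + \sum_(i : 'I_n) \sum_(j : 'I_n | val i == (val j).+1)
     (bz ((bd i == a) && (bd j == c)) - bz ((bd i == c) && (bd j == a))).

(* Y_w = (-1)^(m+1) prod_i mu(b_i w_i') / mu(b_i w_i).  If w = nb b k, the  *)
(* counterclockwise order around b is w = nb b k, w_i = nb b (k-1),         *)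
(* w_i' = nb b (k+1).                                                       *)
Definition Yvar (W B : finType) (nb : B -> 'I_3 -> W) (mu : B -> 'I_3 -> C)
  (w : W) : C :=
  (-1) ^+ (#|[pred e : edge B | nb e.1 e.2 == w]|.+1)
  * \prod_(e : edge B | nb e.1 e.2 == w) (mu e.1 (ordS e.2) / mu e.1 (ord_pred e.2)).

Definition mut_quiver (W : finType) (nu : W -> W -> int) (v a c : W) : int :=
  if (a == v) || (c == v) then - nu a c
  else nu a c + Num.max 0 (nu a v) * Num.max 0 (nu v c)
              - Num.max 0 (nu c v) * Num.max 0 (nu v a).

Definition mut_Y (W : finType) (nu : W -> W -> int) (Y : W -> C) (v u : W) : C :=
  if u == v then (Y v)^-1
  else if 0 < nu v u then Y u * (1 + Y v) ^ (nu v u)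
  else if 0 < nu u v then Y u * (1 + (Y v)^-1) ^ (- nu u v)
  else Y u.

(* Local moves.  The moved graph has the same white vertices (the new       *)
(* vertex ~w0 is identified with w0, all others with themselves) and the    *)
(* same boundary; the two black vertices replaced by the move are reused as *)
(* names for the two new black vertices.  nb' is the adjacency (clockwise)  *)
(* of the new graph.                                                        *)

(* Resplit at the degree-2 internal white vertex w0 with black neighbours   *)
(* b (other neighbours w1, w2) and b' (other neighbours w3, w4), w1, w4 on  *)
(* one face containing b, w0, b' and w2, w3 on the other.  In terms of the  *)
(* rotation system this means (up to the symmetric relabelling             *)
(* 1<->2, 3<->4, which leaves the move unchanged) that b has clockwise      *)
(* neighbours (w0, w1, w2) and b' has clockwise neighbours (w0, w3, w4).    *)
(* The new black vertices, adjacent to {~w0, w1, w4} and {~w0, w2, w3},     *)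
(* then have clockwise neighbours (~w0, w4, w1) and (~w0, w2, w3).          *)
Definition resplit_graph (W B : finType) (n : nat) (nb nb' : B -> 'I_3 -> W)
  (bd : 'I_n -> W) (w0 w1 w2 w3 w4 : W) (b b' : B) : Prop :=
  [/\ b != b', internal bd w0 &
      #|[pred e : edge B | nb e.1 e.2 == w0]| = 2%N] /\
  [/\ (exists i, [/\ nb b i = w0, nb b (ordS i) = w1 & nb b (ordS (ordS i)) = w2]),
      (exists j, [/\ nb b' j = w0, nb b' (ordS j) = w3 & nb b' (ordS (ordS j)) = w4]),
      (exists i, [/\ nb' b i = w0, nb' b (ordS i) = w4 & nb' b (ordS (ordS i)) = w1]),
      (exists j, [/\ nb' b' j = w0, nb' b' (ordS j) = w2 & nb' b' (ordS (ordS j)) = w3]) &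
      forall c, c != b -> c != b' -> nb' c = nb c ].

Definition resplit_points (W : finType) (d : nat) (h : 'cV[C]_d.+1)
  (T T' : W -> 'rV[C]_d.+1) (w0 w1 w2 w3 w4 : W) : Prop :=
  (forall w, w != w0 -> proj_eq (T' w) (T w)) /\
  exists a1 a2 a3 a4 : C,
    [/\ aff h (T w0) = a1 *: aff h (T w1) + a2 *: aff h (T w2),
        aff h (T w0) = a3 *: aff h (T w3) + a4 *: aff h (T w4) &
        proj_eq (T' w0) (a1 *: aff h (T w1) - a4 *: aff h (T w4))].

(* Spider move at the internal face with boundary w1, b, w3, b' (labelled   *)
(* so that this is the clockwise order around the face), w2 the third      *)
(* neighbour of b, w4 the third neighbour of b'.  Then b has clockwise      *)
(* neighbours (w1, w2, w3), b' has clockwise neighbours (w1, w3, w4), and   *)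
(* the face to the right of w1 -> b (resp. w3 -> b') is exactly the face    *)
(* w1, b, w3, b'.  The new black vertices, adjacent to {w1, w2, w4} and     *)
(* {w3, w2, w4}, have clockwise neighbours (w1, w2, w4) and (w3, w4, w2).   *)
Definition spider_graph (W B : finType) (n : nat) (nb nb' : B -> 'I_3 -> W)
  (rot : {perm xedge B n}) (w1 w2 w3 w4 : W) (b b' : B) : Prop :=
  b != b' /\
  exists i j,
  [/\ [/\ nb b i = w1, nb b (ordS i) = w2 & nb b (ordS (ordS i)) = w3],
      [/\ nb b' j = w1, nb b' (ordS j) = w3 & nb b' (ordS (ordS j)) = w4],
      face_next rot (inl (b, i)) = inl (b', ordS j) &
      face_next rot (inl (b', ordS j)) = inl (b, i)] /\
  [/\ (exists k, [/\ nb' b k = w1, nb' b (ordS k) = w2 & nb' b (ordS (ordS k)) = w4]),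
      (exists l, [/\ nb' b' l = w3, nb' b' (ordS l) = w4 & nb' b' (ordS (ordS l)) = w2]) &
      forall c, c != b -> c != b' -> nb' c = nb c ].

(* In affine gauge the three lifts around a black vertex are pairwise distinct
   points of the affine hyperplane h = 1, so every linear relation among them is
   a scalar multiple of the edge weights.  The Y-variable of a white vertex is a
   product of factors, one per incident black vertex, each invariant under
   rescaling the weights, and the quiver is likewise a sum of contributions of
   the black vertices and of the boundary.  A move changes only two black
   vertices b, b', so everything else cancels.  The new relations at b, b' are
   linear combinations of the old ones: for the resplit, of
   V(w0) = a1 V(w1) + a2 V(w2) = a3 V(w3) + a4 V(w4); for the spider move, the
   elimination of one of the two shared vertices.  What remains is an identity
   of rational functions in a1..a4 (resp. in the six old weights) and of
   integers, checked by case analysis on which of the vertices involved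
   coincide with the arguments. *)

From HB Require Import structures.
From mathcomp Require Import all_boot all_order all_algebra all_fingroup.
From mathcomp Require Import complex Rstruct.
From mathcomp Require Import ring zify.
Import Order.TTheory GRing.Theory Num.Theory.
Set Implicit Arguments. Unset Strict Implicit. Unset Printing Implicit Defensive.
Local Open Scope ring_scope.

Lemma ordS3K (i : 'I_3) : ordS (ordS (ordS i)) = i.
Proof. by apply: val_inj; case: i => [[|[|[|?]]] ?]. Qed.

Lemma ord_pred3 (i : 'I_3) : ord_pred i = ordS (ordS i).
Proof. by apply: val_inj; case: i => [[|[|[|?]]] ?]. Qed.

Lemma neq_ordS3 (i : 'I_3) : i != ordS i.
Proof. by case: i => [[|[|[|?]]] ?]. Qed.

Lemma neq_ordSS3 (i : 'I_3) : i != ordS (ordS i).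
Proof. by case: i => [[|[|[|?]]] ?]. Qed.

Lemma big_ord3_rot (R : Type) (idx : R) (op : Monoid.com_law idx)
    (F : 'I_3 -> R) (i : 'I_3) :
  \big[op/idx]_(j < 3) F j = op (F i) (op (F (ordS i)) (F (ordS (ordS i)))).
Proof.
rewrite !big_ord_recl big_ord0 Monoid.mulm1.
case: i => [[|[|[|?]]] lt_i3] //.
- by congr (op (F _) (op (F _) (F _))); apply: val_inj.
- set x := F _; set y := F _; set z := F _.
  rewrite [LHS]Monoid.mulmCA (Monoid.mulmC op x z) {}/x {}/y {}/z.
  by congr (op (F _) (op (F _) (F _))); apply: val_inj.
- rewrite [LHS]Monoid.mulmA [LHS]Monoid.mulmC.
  by congr (op (F _) (op (F _) (F _))); apply: val_inj.
Qed.

Lemma bigD2 (R : Type) (idx : R) (op : Monoid.com_law idx) (I : finType)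
    (b b' : I) (F : I -> R) :
  b != b' ->
  \big[op/idx]_c F c = op (op (F b) (F b')) (\big[op/idx]_(c | (c != b) && (c != b')) F c).
Proof.
move=> neq_bb'; rewrite (bigD1 b) // (bigD1 b') /=; last by rewrite eq_sym.
by rewrite Monoid.mulmA; congr (op _ _); apply: eq_bigl => c; rewrite andbC.
Qed.

Lemma card2_mem (T : finType) (A : {pred T}) x y z :
  #|A| = 2%N -> x \in A -> y \in A -> x != y -> z \in A -> z = x \/ z = y.
Proof.
move=> cardA xA yA neq_xy zA.
have sub_xyA : pred2 x y \subset A by apply/subsetP => e /pred2P[] ->.
have /subset_cardP/(_ sub_xyA) eq_xyA : #|pred2 x y| = #|A| by rewrite card2 neq_xy cardA.
by move: zA; rewrite -eq_xyA => /pred2P.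
Qed.

Section RowRelations.
Variables (R : comPzRingType) (n : nat).

Lemma row_relation_cross (x y z : 'rV[R]_n) p q r p' q' r' :
  p *: x + q *: y + r *: z = 0 -> p' *: x + q' *: y + r' *: z = 0 ->
  (p' * q - p * q') *: y + (p' * r - p * r') *: z = 0.
Proof.
move=> /rowP E /rowP E'; apply/rowP => t; move: (E t) (E' t); rewrite !mxE => {}E {}E'.
transitivity (p' * (p * x 0 t + q * y 0 t + r * z 0 t)
              - p * (p' * x 0 t + q' * y 0 t + r' * z 0 t)); first ring.
by rewrite E E' !mulr0 subrr.
Qed.

Lemma row_relations_elim (x1 x2 x3 x4 : 'rV[R]_n) m1 m2 m3 n1 n3 n4 :
  m1 *: x1 + m2 *: x2 + m3 *: x3 = 0 -> n1 *: x1 + n3 *: x3 + n4 *: x4 = 0 ->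
  (n3 * m2) *: x2 + (- (m3 * n4)) *: x4 + (n3 * m1 - m3 * n1) *: x1 = 0 /\
  (- (m1 * n4)) *: x4 + (n1 * m2) *: x2 + (- (n3 * m1 - m3 * n1)) *: x3 = 0.
Proof.
move=> /rowP E /rowP E'; split; apply/rowP => t; move: (E t) (E' t); rewrite !mxE => {}E {}E'.
- transitivity (n3 * (m1 * x1 0 t + m2 * x2 0 t + m3 * x3 0 t)
                - m3 * (n1 * x1 0 t + n3 * x3 0 t + n4 * x4 0 t)); first ring.
  by rewrite E E' !mulr0 subrr.
- transitivity (n1 * (m1 * x1 0 t + m2 * x2 0 t + m3 * x3 0 t)
                - m1 * (n1 * x1 0 t + n3 * x3 0 t + n4 * x4 0 t)); first ring.
  by rewrite E E' !mulr0 subrr.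
Qed.

Lemma row_relations_resplit (y0 y0' y1 y2 y3 y4 : 'rV[R]_n) a1 a2 a3 a4 :
  y0 = a1 *: y1 + a2 *: y2 -> y0 = a3 *: y3 + a4 *: y4 ->
  (a1 - a4) *: y0' = a1 *: y1 - a4 *: y4 ->
  [/\ (-1) *: y0 + a1 *: y1 + a2 *: y2 = 0, (-1) *: y0 + a3 *: y3 + a4 *: y4 = 0,
      (a1 - a4) *: y0' + a4 *: y4 + (- a1) *: y1 = 0
    & (a1 - a4) *: y0' + a2 *: y2 + (- a3) *: y3 = 0].
Proof.
move=> /rowP E12 /rowP E34 /rowP E'.
split; apply/rowP => t; move: (E12 t) (E34 t) (E' t); rewrite !mxE => {}E12 {}E34 {}E'.
- by rewrite E12; ring.
- by rewrite E34; ring.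
- by rewrite E'; ring.
- by rewrite E'; transitivity (y0 0 t - y0 0 t); [rewrite {1}E12 E34; ring | rewrite subrr].
Qed.

End RowRelations.

Section AffineGauge.
Variables (d : nat) (h : 'cV[C]_d.+1).

Lemma hvalD u v : hval h (u + v) = hval h u + hval h v.
Proof. by rewrite /hval mulmxDl mxE. Qed.

Lemma hvalN v : hval h (- v) = - hval h v.
Proof. by rewrite /hval mulNmx mxE. Qed.

Lemma hvalZ c v : hval h (c *: v) = c * hval h v.
Proof. by rewrite /hval -scalemxAl mxE. Qed.

Lemma aff_scale c v : c != 0 -> aff h (c *: v) = aff h v.
Proof. by move=> c_neq0; rewrite /aff hvalZ scalerA invfM mulrAC mulVf // mul1r. Qed.

Lemma aff_proj_eq u v : proj_eq u v -> aff h u = aff h v.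
Proof. by case=> c c_neq0 ->; apply: aff_scale. Qed.

Lemma hval_scale_aff v : hval h v != 0 -> hval h v *: aff h v = v.
Proof. by move=> hv_neq0; rewrite /aff scalerA mulfV // scale1r. Qed.

Lemma affine_liftE u v : hval h u = 1 -> proj_eq u v -> u = aff h v.
Proof.
move=> hu1 [c c_neq0 def_u]; move: hu1; rewrite def_u hvalZ => hcv1.
by rewrite /aff -[hval h v](mulKf c_neq0) hcv1 mulr1 invrK.
Qed.

Lemma aff_neq u v :
  hval h u != 0 -> hval h v != 0 -> ~ proj_eq u v -> aff h u != aff h v.
Proof.
move=> hu_neq0 hv_neq0 not_uv; apply/eqP => eq_aff; apply: not_uv.
exists (hval h u / hval h v); first by rewrite mulf_neq0 ?invr_eq0.
by rewrite -{1}(hval_scale_aff hu_neq0) eq_aff /aff scalerA.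
Qed.

Lemma affine_indep y z p q :
  hval h y = 1 -> hval h z = 1 -> y != z -> p *: y + q *: z = 0 -> p = 0 /\ q = 0.
Proof.
move=> hy1 hz1 neq_yz rel_yz.
have /eqP : p + q = 0.
  move: (congr1 (hval h) rel_yz); rewrite hvalD !hvalZ hy1 hz1 !mulr1 => ->.
  by rewrite /hval mul0mx mxE.
rewrite addr_eq0 => /eqP def_p; subst p.
move: rel_yz; rewrite scaleNr addrC -scalerBr => /eqP.
by rewrite scaler_eq0 subr_eq0 (eq_sym z) (negbTE neq_yz) orbF => /eqP ->; rewrite oppr0.
Qed.

Lemma affine_relation_unique x y z p q r p' q' r' :
  hval h y = 1 -> hval h z = 1 -> y != z -> p != 0 ->
  p *: x + q *: y + r *: z = 0 -> p' *: x + q' *: y + r' *: z = 0 ->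
  q' = p' / p * q /\ r' = p' / p * r.
Proof.
move=> hy1 hz1 neq_yz p_neq0 rel rel'.
have [/eqP eq_q /eqP eq_r] := affine_indep hy1 hz1 neq_yz (row_relation_cross rel rel').
by split; apply: (mulfI p_neq0); rewrite mulrA mulrCA mulfV // mulr1;
  apply/eqP; rewrite eq_sym -subr_eq0.
Qed.

End AffineGauge.

Definition nu_arrow (W : eqType) (x y a c : W) : int :=
  bz ((x == a) && (y == c)) - bz ((x == c) && (y == a)).

Definition nu_tri (W : eqType) (x y z a c : W) : int :=
  nu_arrow x y a c + nu_arrow y z a c + nu_arrow z x a c.

Definition nu_black (W B : finType) (nb : B -> 'I_3 -> W) (a c : W) (x : B) : int :=
  \sum_(i < 3) nu_arrow (nb x i) (nb x (ordS i)) a c.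

Definition nu_boundary (W : finType) (n : nat) (bd : 'I_n -> W) (a c : W) : int :=
  \sum_(i : 'I_n) \sum_(j : 'I_n | val i == (val j).+1) nu_arrow (bd i) (bd j) a c.

Section QuiverDecomposition.
Variables (W B : finType) (n : nat) (nb : B -> 'I_3 -> W) (bd : 'I_n -> W).

Lemma nu_blackE a c x i :
  nu_black nb a c x = nu_tri (nb x i) (nb x (ordS i)) (nb x (ordS (ordS i))) a c.
Proof. by rewrite /nu_black (big_ord3_rot _ _ i) /= ordS3K addrA. Qed.

Lemma nu_black_notin a c x :
  (forall k, nb x k != a) \/ (forall k, nb x k != c) -> nu_black nb a c x = 0.
Proof.
move=> notin; apply: big1 => k _.
by case: notin => nb_neq; rewrite /nu_arrow !(negbTE (nb_neq _)) ?andbF /= subrr.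
Qed.

Lemma nu_boundary_notin a c :
  (forall k, bd k != a) \/ (forall k, bd k != c) -> nu_boundary bd a c = 0.
Proof.
move=> notin; apply: big1 => i _; apply: big1 => j _.
by case: notin => bd_neq; rewrite /nu_arrow !(negbTE (bd_neq _)) ?andbF /= subrr.
Qed.

Lemma quiver_bigD2 b b' a c : b != b' ->
  quiver nb bd a c = nu_black nb a c b + nu_black nb a c b'
    + (\sum_(x | (x != b) && (x != b')) nu_black nb a c x + nu_boundary bd a c).
Proof.
move=> neq_bb'.
have -> : quiver nb bd a c = \sum_x nu_black nb a c x + nu_boundary bd a c.
  by rewrite /quiver /nu_black /nu_boundary pair_big.
by rewrite (bigD2 _ _ neq_bb') addrA.
Qed.

End QuiverDecomposition.

Lemma nu_arrowC (W : eqType) (x y a c : W) : nu_arrow y x a c = - nu_arrow x y a c.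
Proof. by rewrite /nu_arrow andbC (andbC (y == c)) opprB. Qed.

Lemma nu_tri_spider (W : eqType) (w1 w2 w3 w4 a c : W) :
  nu_tri w1 w2 w3 a c + nu_tri w1 w3 w4 a c = nu_tri w1 w2 w4 a c + nu_tri w3 w4 w2 a c.
Proof. by rewrite /nu_tri (nu_arrowC w1 w3) (nu_arrowC w2 w4); ring. Qed.

Ltac decide_eqs :=
  repeat match goal with
  | H : is_true (?x != ?x) |- _ => by rewrite eqxx in H
  | |- context [?x == ?x] => rewrite eqxx
  | H : is_true (?x != ?y) |- context [?x == ?y] => rewrite (negbTE H)
  | H : is_true (?y != ?x) |- context [?x == ?y] => rewrite (eq_sym x y) (negbTE H)
  | |- context [?x == ?y] => case: (eqVneq x y) => [?|?]; [subst|]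
  end.

Lemma mut_quiver_resplit (W : finType) (w0 w1 w2 w3 w4 : W) (nu R : W -> W -> int) a c :
  uniq [:: w0; w1; w2] -> uniq [:: w0; w3; w4] ->
  uniq [:: w0; w4; w1] -> uniq [:: w0; w2; w3] ->
  (forall x y, nu x y = nu_tri w0 w1 w2 x y + nu_tri w0 w3 w4 x y + R x y) ->
  (forall x, R w0 x = 0) -> (forall x, R x w0 = 0) ->
  mut_quiver nu w0 a c = nu_tri w0 w4 w1 a c + nu_tri w0 w2 w3 a c + R a c.
Proof.
rewrite /= !inE !negb_or !andbT.
move=> /andP[/andP[? ?] ?] /andP[/andP[? ?] ?] /andP[/andP[_ _] ?] /andP[/andP[_ _] ?].
move=> nuE R0l R0r; rewrite /mut_quiver !nuE /nu_tri /nu_arrow; clear nu nuE.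
decide_eqs; rewrite ?R0l ?R0r /bz /=; try done.
all: move: (R _ _) => r; clear -r; lia.
Qed.

Definition tri_Yfactor (W : eqType) (x y z : W) (p q r : C) (u : W) : C :=
  (if x == u then - (q / r) else 1) * (if y == u then - (r / p) else 1)
  * (if z == u then - (p / q) else 1).

Lemma tri_YfactorZ (W : eqType) (x y z : W) (s p q r : C) u : s != 0 ->
  tri_Yfactor x y z (s * p) (s * q) (s * r) u = tri_Yfactor x y z p q r u.
Proof.
move=> s_neq0.
have divKl a e : (s * a) / (s * e) = a / e by rewrite invfM mulrACA mulfV // mul1r.
by rewrite /tri_Yfactor !divKl.
Qed.

(* The sign (-1)^(m+1) of Yvar is spread as one minus sign per incident edge,
   so that Yvar u = - \prod_c Yfactor u c. *)
Definition Yfactor (W B : finType) (nb : B -> 'I_3 -> W) (mu : B -> 'I_3 -> C)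
    (u : W) (c : B) : C :=
  \prod_(i < 3 | nb c i == u) - (mu c (ordS i) / mu c (ord_pred i)).

Section YDecomposition.
Variables (W B : finType) (nb : B -> 'I_3 -> W) (mu : B -> 'I_3 -> C).

Lemma YfactorE u c i :
  Yfactor nb mu u c = tri_Yfactor (nb c i) (nb c (ordS i)) (nb c (ordS (ordS i)))
                        (mu c i) (mu c (ordS i)) (mu c (ordS (ordS i))) u.
Proof.
rewrite /Yfactor big_mkcond (big_ord3_rot _ _ i) /= /tri_Yfactor.
by rewrite !ordS3K !ord_pred3 !ordS3K mulrA.
Qed.

Lemma Yfactor_notin u c : (forall k, nb c k != u) -> Yfactor nb mu u c = 1.
Proof. by move=> nb_neq; rewrite /Yfactor big_pred0 // => k; apply/negbTE. Qed.

Lemma Yvar_bigD2 b b' u : b != b' ->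
  Yvar nb mu u = - (Yfactor nb mu u b * Yfactor nb mu u b'
                    * \prod_(c | (c != b) && (c != b')) Yfactor nb mu u c).
Proof.
move=> neq_bb'; have -> : Yvar nb mu u = - \prod_c Yfactor nb mu u c.
  rewrite /Yvar /Yfactor pair_big_dep /= (prodrN [pred e : edge B | nb e.1 e.2 == u]).
  by rewrite exprS !mulNr mul1r.
by rewrite (bigD2 _ _ neq_bb').
Qed.

End YDecomposition.

Lemma mut_Y_resplit (W : finType) (w0 w1 w2 w3 w4 : W) (a1 a2 a3 a4 : C)
    (nu : W -> W -> int) (Y R : W -> C) u :
  uniq [:: w0; w1; w2] -> uniq [:: w0; w3; w4] ->
  uniq [:: w0; w4; w1] -> uniq [:: w0; w2; w3] ->
  a1 + a2 = 1 -> a3 + a4 = 1 -> a1 != 0 -> a2 != 0 -> a3 != 0 -> a4 != 0 -> a1 - a4 != 0 ->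
  (forall x, Y x = - (tri_Yfactor w0 w1 w2 (-1) a1 a2 x
                      * tri_Yfactor w0 w3 w4 (-1) a3 a4 x * R x)) ->
  R w0 = 1 ->
  nu w0 u = nu_tri w0 w1 w2 w0 u + nu_tri w0 w3 w4 w0 u ->
  nu u w0 = nu_tri w0 w1 w2 u w0 + nu_tri w0 w3 w4 u w0 ->
  mut_Y nu Y w0 u
  = - (tri_Yfactor w0 w4 w1 (a1 - a4) a4 (- a1) u
       * tri_Yfactor w0 w2 w3 (a1 - a4) a2 (- a3) u * R u).
Proof.
rewrite /= !inE !negb_or !andbT.
move=> /andP[/andP[? ?] ?] /andP[/andP[? ?] ?] /andP[/andP[_ _] ?] /andP[/andP[_ _] ?].
move=> sum12 sum34 a1_neq0 a2_neq0 a3_neq0 a4_neq0 a14_neq0 YE R0 nu0u nuu0.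
have a2E : a2 = 1 - a1 by rewrite -sum12 addrC addKr.
have a4E : a4 = 1 - a3 by rewrite -sum34 addrC addKr.
subst a2 a4; clear sum12 sum34.
have den_neq0 : - (- a1 * - a3) + (1 - a1) * (1 - a3) != 0.
  by rewrite (_ : _ + _ = - (a1 - (1 - a3))) ?oppr_eq0 //; ring.
rewrite /mut_Y nu0u nuu0 !YE /tri_Yfactor /nu_tri /nu_arrow; clear Y YE nu nu0u nuu0.
decide_eqs; rewrite /bz /= ?R0.
(* the integer exponents of mut_Y are now closed terms: evaluate them *)
all: try match goal with |- context [_ ^ ?e] =>
  let e' := eval vm_compute in e in change e with e'; rewrite /exprz ?expr1 end.
all: field; by rewrite ?a1_neq0 ?a2_neq0 ?a3_neq0 ?a4_neq0 ?a14_neq0 ?den_neq0.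
Qed.

Lemma tri_Yfactor_spider (W : eqType) (w1 w2 w3 w4 u : W) (m1 m2 m3 n1 n3 n4 : C) :
  uniq [:: w1; w2; w3] -> uniq [:: w1; w3; w4] -> w2 != w4 ->
  m1 != 0 -> m2 != 0 -> m3 != 0 -> n1 != 0 -> n3 != 0 -> n4 != 0 ->
  n3 * m1 - m3 * n1 != 0 ->
  tri_Yfactor w1 w2 w3 m1 m2 m3 u * tri_Yfactor w1 w3 w4 n1 n3 n4 u
  = tri_Yfactor w2 w4 w1 (n3 * m2) (- (m3 * n4)) (n3 * m1 - m3 * n1) u
    * tri_Yfactor w4 w2 w3 (- (m1 * n4)) (n1 * m2) (- (n3 * m1 - m3 * n1)) u.
Proof.
rewrite /= !inE !negb_or !andbT => /andP[/andP[? ?] ?] /andP[/andP[? ?] ?] ?.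
move=> m1_neq0 m2_neq0 m3_neq0 n1_neq0 n3_neq0 n4_neq0 D_neq0.
rewrite /tri_Yfactor; decide_eqs; rewrite ?mulr1 ?mul1r //.
all: field; by rewrite ?m1_neq0 ?m2_neq0 ?m3_neq0 ?n1_neq0 ?n3_neq0 ?n4_neq0 ?D_neq0.
Qed.

Lemma TCD_nb_inj (W B : finType) (d : nat) (nb : B -> 'I_3 -> W)
    (T : W -> 'rV[C]_d.+1) :
  is_TCD nb T -> forall c, injective (nb c).
Proof.
move=> [_ TCD_b] c i j eq_nb; have [distinct _] := TCD_b c.
apply/eqP/negPn/negP => neq_ij.
by apply: (distinct i j neq_ij); rewrite eq_nb; exists 1; rewrite ?oner_eq0 ?scale1r.
Qed.

Lemma uniq_nb_rot (W B : finType) (nb : B -> 'I_3 -> W) c i :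
  injective (nb c) -> uniq [:: nb c i; nb c (ordS i); nb c (ordS (ordS i))].
Proof.
move=> nb_inj; rewrite /= !inE !(inj_eq nb_inj) !negb_or.
by rewrite (neq_ordS3 i) (neq_ordSS3 i) (neq_ordS3 (ordS i)).
Qed.

Section AffineVRC.
Variables (W B : finType) (d : nat) (h : 'cV[C]_d.+1) (nb : B -> 'I_3 -> W).
Variables (T V : W -> 'rV[C]_d.+1) (mu : B -> 'I_3 -> C).
Hypothesis VRC : affine_VRC nb T h V mu.

Lemma VRC_liftE w : V w = aff h (T w).
Proof. by case: VRC => hV1 VT _ _; apply: affine_liftE. Qed.

Lemma VRC_relation c i :
  mu c i *: V (nb c i) + mu c (ordS i) *: V (nb c (ordS i))
  + mu c (ordS (ordS i)) *: V (nb c (ordS (ordS i))) = 0.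
Proof. by case: VRC => _ _ _ rel; rewrite -(rel c) (big_ord3_rot _ _ i) /= addrA. Qed.

Hypotheses (TCD : is_TCD nb T) (genT : generic h T).

Lemma VRC_lift_neq c i j : i != j -> V (nb c i) != V (nb c j).
Proof.
move=> neq_ij; rewrite !VRC_liftE; apply: aff_neq (genT _) (genT _) _.
by case: TCD => _ /(_ c) [distinct _]; apply: distinct.
Qed.

Section Relation.
Variables (c : B) (i : 'I_3) (p q r : C).
Hypotheses (p_neq0 : p != 0)
  (rel : p *: V (nb c i) + q *: V (nb c (ordS i)) + r *: V (nb c (ordS (ordS i))) = 0).

Lemma VRC_weightsE : mu c (ordS i) = mu c i / p * q /\ mu c (ordS (ordS i)) = mu c i / p * r.
Proof.
have [hV1 _ _ _] := VRC.
exact: affine_relation_unique (hV1 _) (hV1 _) (VRC_lift_neq _ (neq_ordS3 (ordS i)))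
         p_neq0 rel (VRC_relation c i).
Qed.

Lemma VRC_relation_neq0 : q != 0 /\ r != 0.
Proof.
have [_ _ mu_neq0 _] := VRC; have [mu1E mu2E] := VRC_weightsE.
move: (mu_neq0 c (ordS i)) (mu_neq0 c (ordS (ordS i))).
by rewrite mu1E mu2E !mulf_eq0 !negb_or => /andP[_ ->] /andP[_ ->].
Qed.

Lemma VRC_Yfactor u :
  Yfactor nb mu u c = tri_Yfactor (nb c i) (nb c (ordS i)) (nb c (ordS (ordS i))) p q r u.
Proof.
have [_ _ mu_neq0 _] := VRC; have [mu1E mu2E] := VRC_weightsE.
have s_neq0 : mu c i / p != 0 by rewrite mulf_neq0 ?invr_eq0.
by rewrite (YfactorE _ _ _ _ i) mu1E mu2E -{1}(divfK p_neq0 (mu c i)) tri_YfactorZ.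
Qed.

End Relation.
End AffineVRC.

Lemma VRC_Yfactor_eq (W B : finType) (d : nat) (h : 'cV[C]_d.+1)
    (nb nb' : B -> 'I_3 -> W) (T T' V V' : W -> 'rV[C]_d.+1) (mu mu' : B -> 'I_3 -> C) c u :
  affine_VRC nb T h V mu -> is_TCD nb' T' -> generic h T' -> affine_VRC nb' T' h V' mu' ->
  nb' c = nb c -> (forall k, V' (nb c k) = V (nb c k)) ->
  Yfactor nb' mu' u c = Yfactor nb mu u c.
Proof.
move=> VRC TCD' genT' VRC' nb'_c V'_c; have [_ _ mu_neq0 _] := VRC.
rewrite (YfactorE nb mu u c ord0) -nb'_c.
apply: (VRC_Yfactor VRC' TCD' genT' (mu_neq0 c ord0)).
by rewrite nb'_c !V'_c; apply: VRC_relation VRC c ord0.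
Qed.

Section Resplit.
Variables (W B : finType) (n : nat) (bd : 'I_n -> W) (nb nb' : B -> 'I_3 -> W).
Variables (w0 w1 w2 w3 w4 : W) (b b' : B) (i j k l : 'I_3).
Hypotheses (neq_bb' : b != b') (w0_internal : internal bd w0)
  (w0_deg2 : #|[pred e : edge B | nb e.1 e.2 == w0]| = 2%N).
Hypotheses (nb_b : [/\ nb b i = w0, nb b (ordS i) = w1 & nb b (ordS (ordS i)) = w2])
  (nb_b' : [/\ nb b' j = w0, nb b' (ordS j) = w3 & nb b' (ordS (ordS j)) = w4])
  (nb'_b : [/\ nb' b k = w0, nb' b (ordS k) = w4 & nb' b (ordS (ordS k)) = w1])
  (nb'_b' : [/\ nb' b' l = w0, nb' b' (ordS l) = w2 & nb' b' (ordS (ordS l)) = w3]).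
Hypothesis nb'_other : forall c, c != b -> c != b' -> nb' c = nb c.
Hypotheses (nb_inj : forall c, injective (nb c)) (nb'_inj : forall c, injective (nb' c)).

Lemma resplit_uniq :
  [/\ uniq [:: w0; w1; w2], uniq [:: w0; w3; w4], uniq [:: w0; w4; w1] & uniq [:: w0; w2; w3]].
Proof.
split.
- by case: nb_b => <- <- <-; apply: uniq_nb_rot.
- by case: nb_b' => <- <- <-; apply: uniq_nb_rot.
- by case: nb'_b => <- <- <-; apply: uniq_nb_rot.
- by case: nb'_b' => <- <- <-; apply: uniq_nb_rot.
Qed.

Lemma nb_neq_w0 c x : c != b -> c != b' -> nb c x != w0.
Proof.
move=> neq_cb neq_cb'; apply/eqP => nb_cx.
have [nb_bi _ _] := nb_b; have [nb_b'j _ _] := nb_b'.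
have neq_edges : (b, i) != (b', j) by rewrite xpair_eqE negb_and neq_bb'.
have at_w0 (e : edge B) : nb e.1 e.2 = w0 -> e \in [pred e : edge B | nb e.1 e.2 == w0].
  by rewrite inE /= => ->.
have [[eq_cb _]|[eq_cb' _]] :=
  card2_mem w0_deg2 (at_w0 (b, i) nb_bi) (at_w0 (b', j) nb_b'j) neq_edges (at_w0 (c, x) nb_cx).
- by rewrite eq_cb eqxx in neq_cb.
- by rewrite eq_cb' eqxx in neq_cb'.
Qed.

Let rest_quiver (a c : W) : int :=
  \sum_(x | (x != b) && (x != b')) nu_black nb a c x + nu_boundary bd a c.

Lemma resplit_quiver_old a c :
  quiver nb bd a c = nu_tri w0 w1 w2 a c + nu_tri w0 w3 w4 a c + rest_quiver a c.
Proof.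
rewrite (quiver_bigD2 _ _ _ _ neq_bb') (nu_blackE _ _ _ b i) (nu_blackE _ _ _ b' j).
by have [-> -> ->] := nb_b; have [-> -> ->] := nb_b'.
Qed.

Lemma resplit_quiver_new a c :
  quiver nb' bd a c = nu_tri w0 w4 w1 a c + nu_tri w0 w2 w3 a c + rest_quiver a c.
Proof.
rewrite (quiver_bigD2 _ _ _ _ neq_bb') (nu_blackE _ _ _ b k) (nu_blackE _ _ _ b' l).
have [-> -> ->] := nb'_b; have [-> -> ->] := nb'_b'; congr (_ + (_ + _)).
by apply: eq_bigr => x /andP[neq_xb neq_xb']; rewrite /nu_black nb'_other.
Qed.

Lemma rest_quiver_w0 x : rest_quiver w0 x = 0 /\ rest_quiver x w0 = 0.
Proof.
have bd_neq_w0 m : bd m != w0 by apply: contraNneq w0_internal => <-; apply: codom_f.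
have nb_neq c : (c != b) && (c != b') -> forall m, nb c m != w0.
  by move=> /andP[neq_cb neq_cb'] m; apply: nb_neq_w0.
rewrite /rest_quiver !nu_boundary_notin; [|by right|by left].
by split; rewrite addr0 big1 // => c /nb_neq nb_c; apply: nu_black_notin; [left|right].
Qed.

Lemma resplit_quiver a c : quiver nb' bd a c = mut_quiver (quiver nb bd) w0 a c.
Proof.
have [u012 u034 u041 u023] := resplit_uniq.
rewrite resplit_quiver_new (mut_quiver_resplit a c u012 u034 u041 u023 resplit_quiver_old) //.
- by move=> x; case: (rest_quiver_w0 x).
- by move=> x; case: (rest_quiver_w0 x).
Qed.

Variables (d : nat) (h : 'cV[C]_d.+1) (T T' V V' : W -> 'rV[C]_d.+1) (mu mu' : B -> 'I_3 -> C).
Hypotheses (TCD : is_TCD nb T) (TCD' : is_TCD nb' T') (genT : generic h T) (genT' : generic h T')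
  (VRC : affine_VRC nb T h V mu) (VRC' : affine_VRC nb' T' h V' mu').
Hypothesis T'_other : forall w, w != w0 -> proj_eq (T' w) (T w).
Variables (a1 a2 a3 a4 : C).
Hypotheses (T_w0_12 : aff h (T w0) = a1 *: aff h (T w1) + a2 *: aff h (T w2))
  (T_w0_34 : aff h (T w0) = a3 *: aff h (T w3) + a4 *: aff h (T w4))
  (T'_w0 : proj_eq (T' w0) (a1 *: aff h (T w1) - a4 *: aff h (T w4))).

Lemma resplit_lift_other w : w != w0 -> V' w = V w.
Proof.
move=> neq_w; rewrite (VRC_liftE VRC') (VRC_liftE VRC).
exact/aff_proj_eq/T'_other.
Qed.

Lemma hval_resplit_comb : hval h (a1 *: V w1 - a4 *: V w4) = a1 - a4.
Proof. by have [hV1 _ _ _] := VRC; rewrite hvalD hvalN !hvalZ !hV1 !mulr1. Qed.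

Lemma resplit_a14_neq0 : a1 - a4 != 0.
Proof.
have [s s_neq0 T'E] := T'_w0; move: (genT' w0).
by rewrite T'E -!(VRC_liftE VRC) hvalZ hval_resplit_comb mulf_eq0 negb_or => /andP[].
Qed.

Lemma resplit_lift_w0 : (a1 - a4) *: V' w0 = a1 *: V w1 - a4 *: V w4.
Proof.
rewrite (VRC_liftE VRC') (aff_proj_eq h T'_w0) -!(VRC_liftE VRC) -{1}hval_resplit_comb.
by apply: hval_scale_aff; rewrite hval_resplit_comb resplit_a14_neq0.
Qed.

Lemma resplit_lifts : V w0 = a1 *: V w1 + a2 *: V w2 /\ V w0 = a3 *: V w3 + a4 *: V w4.
Proof. by rewrite !(VRC_liftE VRC). Qed.

Lemma resplit_sums : a1 + a2 = 1 /\ a3 + a4 = 1.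
Proof.
have [hV1 _ _ _] := VRC; have [V12 V34] := resplit_lifts.
by split; [move: (congr1 (hval h) V12) | move: (congr1 (hval h) V34)];
  rewrite hvalD !hvalZ !hV1 !mulr1.
Qed.

Lemma resplit_relations :
  [/\ (-1) *: V w0 + a1 *: V w1 + a2 *: V w2 = 0,
      (-1) *: V w0 + a3 *: V w3 + a4 *: V w4 = 0,
      (a1 - a4) *: V' w0 + a4 *: V' w4 + (- a1) *: V' w1 = 0
    & (a1 - a4) *: V' w0 + a2 *: V' w2 + (- a3) *: V' w3 = 0].
Proof.
have [u012 u034 _ _] := resplit_uniq; move: u012 u034.
rewrite /= !inE !negb_or => /andP[/andP[n01 n02] _] /andP[/andP[n03 n04] _].
rewrite !(resplit_lift_other (w := w1), resplit_lift_other (w := w2),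
          resplit_lift_other (w := w3), resplit_lift_other (w := w4)) 1?eq_sym //.
have [V12 V34] := resplit_lifts.
exact: row_relations_resplit V12 V34 resplit_lift_w0.
Qed.

Lemma resplit_weights_neq0 : [/\ a1 != 0, a2 != 0, a3 != 0 & a4 != 0].
Proof.
have [R012 R034 _ _] := resplit_relations.
have m1_neq0 : (-1 : C) != 0 by rewrite oppr_eq0 oner_eq0.
have [E0 E1 E2] := nb_b; rewrite -E0 -E1 -E2 in R012.
have [E0' E1' E2'] := nb_b'; rewrite -E0' -E1' -E2' in R034.
have [a1_neq0 a2_neq0] := VRC_relation_neq0 VRC TCD genT m1_neq0 R012.
by have [a3_neq0 a4_neq0] := VRC_relation_neq0 VRC TCD genT m1_neq0 R034.
Qed.

Lemma resplit_Yfactors u :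
  [/\ Yfactor nb mu u b = tri_Yfactor w0 w1 w2 (-1) a1 a2 u,
      Yfactor nb mu u b' = tri_Yfactor w0 w3 w4 (-1) a3 a4 u,
      Yfactor nb' mu' u b = tri_Yfactor w0 w4 w1 (a1 - a4) a4 (- a1) u
    & Yfactor nb' mu' u b' = tri_Yfactor w0 w2 w3 (a1 - a4) a2 (- a3) u].
Proof.
have [R012 R034 R041 R023] := resplit_relations.
have m1_neq0 : (-1 : C) != 0 by rewrite oppr_eq0 oner_eq0.
have [E0 E1 E2] := nb_b; rewrite -E0 -E1 -E2 in R012.
have [E0' E1' E2'] := nb_b'; rewrite -E0' -E1' -E2' in R034.
have [F0 F1 F2] := nb'_b; rewrite -F0 -F1 -F2 in R041.
have [F0' F1' F2'] := nb'_b'; rewrite -F0' -F1' -F2' in R023.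
split.
- by rewrite (VRC_Yfactor VRC TCD genT m1_neq0 R012) E0 E1 E2.
- by rewrite (VRC_Yfactor VRC TCD genT m1_neq0 R034) E0' E1' E2'.
- by rewrite (VRC_Yfactor VRC' TCD' genT' resplit_a14_neq0 R041) F0 F1 F2.
- by rewrite (VRC_Yfactor VRC' TCD' genT' resplit_a14_neq0 R023) F0' F1' F2'.
Qed.

Lemma resplit_Yfactor_other u c : c != b -> c != b' -> Yfactor nb' mu' u c = Yfactor nb mu u c.
Proof.
move=> neq_cb neq_cb'; apply: (VRC_Yfactor_eq u VRC TCD' genT' VRC' (nb'_other neq_cb neq_cb')).
by move=> x; apply/resplit_lift_other/nb_neq_w0.
Qed.

Lemma resplit_Yvar u : Yvar nb' mu' u = mut_Y (quiver nb bd) (Yvar nb mu) w0 u.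
Proof.
have [u012 u034 u041 u023] := resplit_uniq.
have [a1_neq0 a2_neq0 a3_neq0 a4_neq0] := resplit_weights_neq0.
have [sum12 sum34] := resplit_sums.
pose R x := \prod_(c | (c != b) && (c != b')) Yfactor nb mu x c.
have YE x : Yvar nb mu x = - (tri_Yfactor w0 w1 w2 (-1) a1 a2 x
                              * tri_Yfactor w0 w3 w4 (-1) a3 a4 x * R x).
  by rewrite (Yvar_bigD2 _ _ _ neq_bb'); have [-> -> _ _] := resplit_Yfactors x.
have R0 : R w0 = 1.
  by apply: big1 => c /andP[neq_cb neq_cb']; apply: Yfactor_notin => x; apply: nb_neq_w0.
have nu0u : quiver nb bd w0 u = nu_tri w0 w1 w2 w0 u + nu_tri w0 w3 w4 w0 u.
  by rewrite resplit_quiver_old (proj1 (rest_quiver_w0 u)) addr0.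
have nuu0 : quiver nb bd u w0 = nu_tri w0 w1 w2 u w0 + nu_tri w0 w3 w4 u w0.
  by rewrite resplit_quiver_old (proj2 (rest_quiver_w0 u)) addr0.
rewrite (mut_Y_resplit u012 u034 u041 u023 sum12 sum34 a1_neq0 a2_neq0 a3_neq0 a4_neq0
           resplit_a14_neq0 YE R0 nu0u nuu0).
rewrite (Yvar_bigD2 _ _ _ neq_bb'); have [_ _ -> ->] := resplit_Yfactors u.
by congr (- (_ * _)); apply: eq_bigr => c /andP[]; apply: resplit_Yfactor_other.
Qed.

End Resplit.

Section Spider.
Variables (W B : finType) (n : nat) (bd : 'I_n -> W) (nb nb' : B -> 'I_3 -> W).
Variables (w1 w2 w3 w4 : W) (b b' : B) (i j k l : 'I_3).
Hypotheses (neq_bb' : b != b')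
  (nb_b : [/\ nb b i = w1, nb b (ordS i) = w2 & nb b (ordS (ordS i)) = w3])
  (nb_b' : [/\ nb b' j = w1, nb b' (ordS j) = w3 & nb b' (ordS (ordS j)) = w4])
  (nb'_b : [/\ nb' b k = w1, nb' b (ordS k) = w2 & nb' b (ordS (ordS k)) = w4])
  (nb'_b' : [/\ nb' b' l = w3, nb' b' (ordS l) = w4 & nb' b' (ordS (ordS l)) = w2]).
Hypothesis nb'_other : forall c, c != b -> c != b' -> nb' c = nb c.

Lemma spider_quiver a c : quiver nb' bd a c = quiver nb bd a c.
Proof.
rewrite !(quiver_bigD2 _ _ _ _ neq_bb') (nu_blackE nb _ _ b i) (nu_blackE nb _ _ b' j).
rewrite (nu_blackE nb' _ _ b k) (nu_blackE nb' _ _ b' l).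
have [-> -> ->] := nb_b; have [-> -> ->] := nb_b'.
have [-> -> ->] := nb'_b; have [-> -> ->] := nb'_b'.
rewrite nu_tri_spider; congr (_ + (_ + _)).
by apply: eq_bigr => x /andP[neq_xb neq_xb']; rewrite /nu_black nb'_other.
Qed.

Variables (d : nat) (h : 'cV[C]_d.+1) (T T' V V' : W -> 'rV[C]_d.+1) (mu mu' : B -> 'I_3 -> C).
Hypotheses (TCD : is_TCD nb T) (TCD' : is_TCD nb' T') (genT' : generic h T')
  (VRC : affine_VRC nb T h V mu) (VRC' : affine_VRC nb' T' h V' mu').
Hypothesis T'_T : forall w, proj_eq (T' w) (T w).

Let m1 := mu b i.
Let m2 := mu b (ordS i).
Let m3 := mu b (ordS (ordS i)).
Let n1 := mu b' j.
Let n3 := mu b' (ordS j).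
Let n4 := mu b' (ordS (ordS j)).
Let D := n3 * m1 - m3 * n1.

Lemma spider_lift w : V' w = V w.
Proof. by rewrite (VRC_liftE VRC') (VRC_liftE VRC); apply: aff_proj_eq. Qed.

Lemma spider_relations :
  (n3 * m2) *: V' (nb' b (ordS k)) + (- (m3 * n4)) *: V' (nb' b (ordS (ordS k)))
    + D *: V' (nb' b (ordS (ordS (ordS k)))) = 0 /\
  (- (m1 * n4)) *: V' (nb' b' (ordS l)) + (n1 * m2) *: V' (nb' b' (ordS (ordS l)))
    + (- D) *: V' (nb' b' (ordS (ordS (ordS l)))) = 0.
Proof.
have Rb := VRC_relation VRC b i; have Rb' := VRC_relation VRC b' j.
have [E1 E2 E3] := nb_b; have [E1' E3' E4'] := nb_b'.
rewrite E1 E2 E3 in Rb; rewrite E1' E3' E4' in Rb'.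
have [F1 F2 F4] := nb'_b; have [G3 G4 G2] := nb'_b'.
by rewrite !ordS3K F1 F2 F4 G3 G4 G2 !spider_lift; apply: row_relations_elim.
Qed.

Lemma spider_D_neq0 : D != 0.
Proof.
have [_ _ mu_neq0 _] := VRC; have [Rb _] := spider_relations.
have p_neq0 : n3 * m2 != 0 by apply: mulf_neq0; apply: mu_neq0.
by have [_] := VRC_relation_neq0 VRC' TCD' genT' p_neq0 Rb.
Qed.

Lemma spider_Yfactors_new u :
  Yfactor nb' mu' u b = tri_Yfactor w2 w4 w1 (n3 * m2) (- (m3 * n4)) D u /\
  Yfactor nb' mu' u b' = tri_Yfactor w4 w2 w3 (- (m1 * n4)) (n1 * m2) (- D) u.
Proof.
have [_ _ mu_neq0 _] := VRC; have [Rb Rb'] := spider_relations.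
have p_neq0 : n3 * m2 != 0 by apply: mulf_neq0; apply: mu_neq0.
have p'_neq0 : - (m1 * n4) != 0 by rewrite oppr_eq0; apply: mulf_neq0; apply: mu_neq0.
rewrite (VRC_Yfactor VRC' TCD' genT' p_neq0 Rb) (VRC_Yfactor VRC' TCD' genT' p'_neq0 Rb').
by rewrite !ordS3K; have [-> -> ->] := nb'_b; have [-> -> ->] := nb'_b'.
Qed.

Lemma spider_Yvar u : Yvar nb' mu' u = Yvar nb mu u.
Proof.
have [_ _ mu_neq0 _] := VRC.
have [E1 E2 E3] := nb_b; have [E1' E3' E4'] := nb_b'; have [_ F2 F4] := nb'_b.
have u123 : uniq [:: w1; w2; w3].
  by rewrite -E1 -E2 -E3; exact: uniq_nb_rot _ (TCD_nb_inj TCD (c := b)).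
have u134 : uniq [:: w1; w3; w4].
  by rewrite -E1' -E3' -E4'; exact: uniq_nb_rot _ (TCD_nb_inj TCD (c := b')).
have n24 : w2 != w4 by rewrite -F2 -F4 (inj_eq (TCD_nb_inj TCD' (c := b))) neq_ordS3.
rewrite !(Yvar_bigD2 _ _ _ neq_bb'); have [-> ->] := spider_Yfactors_new u.
rewrite (YfactorE _ _ _ _ i) (YfactorE _ _ _ _ j) E1 E2 E3 E1' E3' E4'.
rewrite -(tri_Yfactor_spider _ u123 u134 n24) ?spider_D_neq0 //; try by apply: mu_neq0.
congr (- (_ * _)); apply: eq_bigr => c /andP[neq_cb neq_cb'].
apply: (VRC_Yfactor_eq u VRC TCD' genT' VRC' (nb'_other neq_cb neq_cb')) => x.
exact: spider_lift.
Qed.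

End Spider.

Theorem lemma7p16 (d n : nat) (W B : finType)
  (nb : B -> 'I_3 -> W) (bd : 'I_n -> W) (rot : {perm xedge B n})
  (T : W -> 'rV[C]_d.+1) (h : 'cV[C]_d.+1)
  (nb' : B -> 'I_3 -> W) (T' : W -> 'rV[C]_d.+1) :
  btb_embedding nb bd rot -> minimal rot ->
  is_TCD nb T -> is_TCD nb' T' ->
  h != 0 -> generic h T -> generic h T' ->
  (forall (w0 w1 w2 w3 w4 : W) (b b' : B),
     resplit_graph nb nb' bd w0 w1 w2 w3 w4 b b' ->
     resplit_points h T T' w0 w1 w2 w3 w4 ->
     forall V mu V' mu', affine_VRC nb T h V mu -> affine_VRC nb' T' h V' mu' ->
       (forall a c, quiver nb' bd a c = mut_quiver (quiver nb bd) w0 a c) /\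
       (forall u, internal bd u ->
          Yvar nb' mu' u = mut_Y (quiver nb bd) (Yvar nb mu) w0 u)) /\
  (forall (w1 w2 w3 w4 : W) (b b' : B),
     spider_graph nb nb' rot w1 w2 w3 w4 b b' ->
     (forall w, proj_eq (T' w) (T w)) ->
     forall V mu V' mu', affine_VRC nb T h V mu -> affine_VRC nb' T' h V' mu' ->
       (forall a c, quiver nb' bd a c = quiver nb bd a c) /\
       (forall u, internal bd u -> Yvar nb' mu' u = Yvar nb mu u)).
Proof.
move=> _ _ TCD TCD' _ genT genT'; split.
- move=> w0 w1 w2 w3 w4 b b' [[neq_bb' w0_int w0_deg2]
                                [[i nb_b] [j nb_b'] [k nb'_b] [l nb'_b'] nb'_other]].
  move=> [T'_other [a1 [a2 [a3 [a4 [T_w0_12 T_w0_34 T'_w0]]]]]] V mu V' mu' VRC VRC'.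
  have nb_inj := TCD_nb_inj TCD; have nb'_inj := TCD_nb_inj TCD'.
  split=> [a c | u _].
  + exact: (resplit_quiver neq_bb' w0_int w0_deg2 nb_b nb_b' nb'_b nb'_b' nb'_other nb_inj nb'_inj).
  + exact: (resplit_Yvar neq_bb' w0_int w0_deg2 nb_b nb_b' nb'_b nb'_b' nb'_other nb_inj nb'_inj
              TCD TCD' genT genT' VRC VRC' T'_other T_w0_12 T_w0_34 T'_w0).
- move=> w1 w2 w3 w4 b b' [neq_bb' [i [j [[nb_b nb_b' _ _] [[k nb'_b] [l nb'_b'] nb'_other]]]]].
  move=> T'_T V mu V' mu' VRC VRC'; split=> [a c | u _].
  + exact: (spider_quiver bd neq_bb' nb_b nb_b' nb'_b nb'_b' nb'_other).
  + exact: (spider_Yvar neq_bb' nb_b nb_b' nb'_b nb'_b' nb'_other TCD TCD' genT' VRC VRC' T'_T).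
Qed.
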